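(* Let $0<p,q,r\le\infty$ with $\frac1p+\frac1q=\frac1r$, let $\alpha=(\alpha_1,\dots,\alpha_N)$ be an $N$-tuple of pairwise distinct vectors in $\mathbb{R}^n$, and let $\rho>0$. For vector-valued functions $f=(f_1,\dots,f_N)$, $g=(g_1,\dots,g_N)$ on $\mathbb{R}^n$ define $$S_{\alpha,\rho}(f,g)(x)=\big(f_1(x+\rho\alpha_1)g_1(x-\alpha_1),\ \dots,\ f_N(x+\rho\alpha_N)g_N(x-\alpha_N)\big).$$ Then the norm of $S_{\alpha,\rho}$ as a bilinear operator from $L^p(\ell^2)\times L^q(\ell^2)$ to $L^r(\ell^2)$ satisfies $$\|S_{\alpha,\rho}\|_{L^p(\ell^2)\times L^q(\ell^2)\to L^r(\ell^2)}\ \ge\ \max\{N^{1/p-1/2},\,N^{1/q-1/2}\}.$$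
   Context: For $h=(h_1,\dots,h_N)$, $\|h\|_{L^s(\ell^2)}=\big\|\big(\sum_{k=1}^N|h_k|^2\big)^{1/2}\big\|_{L^s(\mathbb{R}^n)}$. The operator norm is the supremum of $\|S_{\alpha,\rho}(f,g)\|_{L^r(\ell^2)}$ over $f,g$ with $\|f\|_{L^p(\ell^2)}=\|g\|_{L^q(\ell^2)}=1$ (possibly $+\infty$). *)

From HB Require Import structures.
From mathcomp Require Import all_boot all_order all_algebra.
From mathcomp Require Import all_classical all_reals all_analysis.

Set Implicit Arguments.
Unset Strict Implicit.
Unset Printing Implicit Defensive.
Import Order.TTheory GRing.Theory Num.Theory.
Import numFieldNormedType.Exports.
Local Open Scope classical_set_scope.
Local Open Scope ring_scope.

(* Lebesgue measure on R^n, built as the iterated product measure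
   (((pt x R) x R) x ... x R), with pt = unit carrying the Dirac mass. *)
Fixpoint Rpow (R : realType) (n : nat) : {d : measure_display & measurableType d} :=
  match n with
  | 0 => existT _ _ (unit : measurableType _)
  | m.+1 => existT _ _ ((projT2 (Rpow R m) * (measurableTypeR R : measurableType _))%type : measurableType _)
  end.

Definition Rpow_t (R : realType) (n : nat) : measurableType (projT1 (Rpow R n)) :=
  projT2 (Rpow R n).

Fixpoint lebRn (R : realType) (n : nat) :
    {measure set (Rpow_t R n) -> \bar R} :=
  match n return {measure set (Rpow_t R n) -> \bar R} with
  | 0 => (\d_tt : {measure set unit -> \bar R})
  | m.+1 => ((lebRn R m \x (@lebesgue_measure R))%E
             : {measure set (Rpow_t R m * measurableTypeR R)%type -> \bar R})
  end.

(* Coordinates: a point of Rpow_t R m.+1 = Rpow_t R m * R is (y, t) where t is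
   the coordinate of index m. *)
Fixpoint rcoord (R : realType) (n : nat) : Rpow_t R n -> nat -> R :=
  match n return Rpow_t R n -> nat -> R with
  | 0 => fun _ _ => 0
  | m.+1 => fun y i => if i == m then y.2 else rcoord y.1 i
  end.

Definition to_row (R : realType) (n : nat) (y : Rpow_t R n) : 'rV[R]_n :=
  \row_(i < n) rcoord y i.

Definition meas_Rn (R : realType) (n : nat) (h : 'rV[R]_n -> R) : Prop :=
  measurable_fun [set: Rpow_t R n] (fun y => h (to_row y)).

Definition LsNorm (R : realType) (n : nat) (s : \bar R) (h : 'rV[R]_n -> R) : \bar R :=
  Lnorm (lebRn R n) s (fun y => (h (to_row y))%:E).

Definition l2fun (R : realType) (n N : nat) (h : 'I_N -> 'rV[R]_n -> R)
  : 'rV[R]_n -> R := fun x => Num.sqrt (\sum_(k < N) h k x ^+ 2).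

Definition LsL2Norm (R : realType) (n N : nat) (s : \bar R)
  (h : 'I_N -> 'rV[R]_n -> R) : \bar R := LsNorm s (l2fun h).

Definition S_op (R : realType) (n N : nat) (alpha : 'I_N -> 'rV[R]_n) (rho : R)
  (f g : 'I_N -> 'rV[R]_n -> R) : 'I_N -> 'rV[R]_n -> R :=
  fun k x => f k (x + rho *: alpha k) * g k (x - alpha k).

Definition S_opnorm (R : realType) (n N : nat) (alpha : 'I_N -> 'rV[R]_n) (rho : R)
  (p q r : \bar R) : \bar R :=
  ereal_sup [set e | exists f g : 'I_N -> 'rV[R]_n -> R,
    [/\ (forall k, meas_Rn (f k)), (forall k, meas_Rn (g k)),
        LsL2Norm p f = 1%E, LsL2Norm q g = 1%E &
        e = LsL2Norm r (S_op alpha rho f g)]].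

From HB Require Import structures.
From mathcomp Require Import all_boot all_order all_algebra.
From mathcomp Require Import all_classical all_reals all_analysis.
From mathcomp Require Import lra ring.
Import Order.TTheory GRing.Theory Num.Theory.
Local Open Scope classical_set_scope.
Local Open Scope ring_scope.
Set Implicit Arguments. Unset Strict Implicit. Unset Printing Implicit Defensive.

(* Choose a side e so that the cubes at t alpha_k are pairwise disjoint for
   every |t| >= min(1, rho) (the alpha_k are distinct).  Take f_k the cube at
   (1 + rho) alpha_k and g_k the cube at 0 for every k; both translations in
   S_{alpha,rho} move these cubes onto the cube at alpha_k, so S(f,g) is a
   family of disjoint cubes.  The L^s(l^2) norm of N disjoint cubes of volume
   m is (N m)^(1/s), that of N copies of one cube is sqrt(N) m^(1/s); after
   normalizing f and g, 1/p + 1/q = 1/r leaves exactly N^(1/q - 1/2).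
   The bound N^(1/p - 1/2) follows by symmetry, since
   S_{alpha,rho}(f,g) = S_{-rho alpha, 1/rho}(g,f). *)

Definition inbox (R : realType) (n : nat) (a : 'rV[R]_n) (e : R) (x : 'rV[R]_n) : bool :=
  [forall i, a 0 i <= x 0 i < a 0 i + e].

Definition boxes_disjoint (R : realType) (n N : nat) (a : 'I_N -> 'rV[R]_n) (e : R) :=
  forall k l x, inbox (a k) e x -> inbox (a l) e x -> k = l.

Definition coord_box (R : realType) (n : nat) (a : nat -> R) (e : R) : set (Rpow_t R n) :=
  [set y | forall i, (i < n)%N -> a i <= rcoord y i < a i + e].
Arguments coord_box {R} n a e.

(* Coordinates of a row vector as a function on nat (0 beyond n). *)
Definition row_coord (R : realType) (n : nat) (a : 'rV[R]_n) (i : nat) : R :=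
  oapp (fun j : 'I_n => a 0 j) 0 (insub i).

Lemma inbox_preimage (R : realType) (n : nat) (a : 'rV[R]_n) (e : R) :
  [set y : Rpow_t R n | inbox a e (to_row y)] = coord_box n (row_coord a) e.
Proof.
apply/seteqP; split => y /=.
  move=> /forallP H i ilt.
  have := H (Ordinal ilt); rewrite /to_row !mxE /row_coord.
  by rewrite -[X in insub X]/(val (Ordinal ilt)) valK.
move=> H; apply/forallP => j; have := H j (ltn_ord j).
by rewrite /to_row !mxE /row_coord valK.
Qed.

Lemma coord_box_measure (R : realType) (n : nat) (a : nat -> R) (e : R) : 0 < e ->
  measurable (coord_box n a e) /\ lebRn R n (coord_box n a e) = (e ^+ n)%:E.
Proof.
move=> e0; elim: n => [|m [mB muB]].
  have -> : coord_box 0 a e = setT by apply/seteqP; split => // y _ i.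
  by split; [exact: measurableT | rewrite /= diracE in_setT].
have -> : coord_box m.+1 a e =
    (coord_box m a e `*` `[a m, a m + e[%classic : set (Rpow_t R m * R)%type).
  apply/seteqP; split => -[y t] /= H.
    split; last by have := H m (ltnSn m); rewrite /= eqxx in_itv.
    by move=> i im; have := H i (ltnW im); rewrite /= (ltn_eqF im).
  case: H => H1; rewrite in_itv /= => H2 i; rewrite ltnS leq_eqVlt.
  by case/orP => [/eqP ->|im]; rewrite /= ?eqxx // (ltn_eqF im); apply: H1.
split; first exact: measurableX.
rewrite /= product_measure1E // muB.
rewrite [X in (_ * X)%E](_ : _ = e%:E); last first.
  apply: etrans (lebesgue_measure_itv (Interval (BLeft (a m)) (BLeft (a m + e)))) _.
  by rewrite /= lte_fin ltrDl e0 -EFinD addrAC subrr add0r.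
by rewrite exprS mulrC EFinM.
Qed.

Lemma box_measure (R : realType) (n : nat) (a : 'rV[R]_n) (e : R) : 0 < e ->
  measurable [set y : Rpow_t R n | inbox a e (to_row y)] /\
  lebRn R n [set y : Rpow_t R n | inbox a e (to_row y)] = (e ^+ n)%:E.
Proof. by move=> e0; rewrite inbox_preimage; apply: coord_box_measure. Qed.

Lemma disjoint_boxes_measure (R : realType) (n N : nat) (a : 'I_N -> 'rV[R]_n)
    (e : R) : 0 < e -> boxes_disjoint a e ->
  measurable [set y : Rpow_t R n | [exists k, inbox (a k) e (to_row y)]] /\
  lebRn R n [set y : Rpow_t R n | [exists k, inbox (a k) e (to_row y)]]
    = (N%:R * e ^+ n)%:E.
Proof.
move=> e0 disj.
have -> : [set y : Rpow_t R n | [exists k, inbox (a k) e (to_row y)]] =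
    \big[setU/set0]_(k < N) [set y : Rpow_t R n | inbox (a k) e (to_row y)].
  apply/seteqP; split => y /=.
    by move=> /existsP [k Hk]; rewrite (bigD1 k) //=; left.
  elim/big_ind: _ => [//|S1 S2 IH1 IH2 [/IH1|/IH2] //|k _ Hk].
  by apply/existsP; exists k.
split; first by apply: bigsetU_measurable => k _; case: (box_measure (a k) e0).
rewrite measure_bigsetU_ord_cond.
- rewrite (eq_bigr (fun=> (e ^+ n)%:E)); last first.
    by move=> k _; exact: (proj2 (box_measure (a k) e0)).
  by rewrite sumEFin sumr_const card_ord mulr_natl.
- by move=> k _; case: (box_measure (a k) e0).
- by move=> k l _ _ [x [/= Hk Hl]]; apply: (disj k l (to_row x)).
Qed.

(* The L^s norm (0 < s <= +oo) of c 1_A, for a set A of finite positive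
   measure m, is c m^(1/s); for s = +oo this uses that A is not negligible. *)
Lemma Lnorm_indic d (T : measurableType d) (R : realType)
    (mu : {measure set T -> \bar R}) (A : set T) (c m : R) (s : \bar R) :
  measurable A -> mu A = m%:E -> 0 < m -> 0 <= c -> (0 < s)%E ->
  Lnorm mu s (fun y => (c * \1_A y)%:E) = (c * m `^ fine s^-1)%:E.
Proof.
move=> mA muA m0 c0; case: s => [t||] //=; rewrite ?lte_fin => t0.
  have pow_indic x : `|c * \1_A x| `^ t = c `^ t * \1_A x.
    rewrite indicE; case: (x \in A) => /=; first by rewrite !mulr1 ger0_norm.
    by rewrite !mulr0 normr0 powR0 // gt_eqF.
  rewrite unlock /=; under eq_integral do rewrite pow_indic.
  rewrite (integralZl_indic measurableT (fun _ => A)) //; last first.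
    by rewrite ltNge powR_ge0.
  rewrite integral_indic // setIT muA -EFinM poweR_EFin fine_invr.
  rewrite powRM ?powR_ge0 ?(ltW m0) // -powRrM mulfV ?gt_eqF // powRr1 //.
have muT : (0 < mu [set: T])%E.
  apply: (lt_le_trans (y := mu A)); first by rewrite muA lte_fin.
  by apply: le_measure; rewrite ?inE.
rewrite unlock /= muT powRr0 mulr1.
apply/eqP; rewrite eq_le; apply/andP; split.
  apply/ess_sup_inf.ess_supP; apply: nearW => x /=.
  by rewrite indicE; case: (x \in A); rewrite /= ?mulr1 ?mulr0 lee_fin ?normr0 // ger0_norm.
rewrite leNgt; apply/negP => H.
have [B [mB muB0 sB]] := ess_sup_inf.ess_sup_ge mu (abse \o (fun y => (c * \1_A y)%:E)).
have : (mu A <= mu B)%E.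
  apply: le_measure; rewrite ?inE // => x Ax; apply: sB => /=; apply/negP.
  by rewrite -ltNge indicE mem_set // mulr1 ger0_norm.
by rewrite muB0 muA lee_fin leNgt m0.
Qed.

Lemma indic_boolE (T : Type) (R : realType) (Q : T -> bool) (y : T) :
  (Q y)%:R = \1_[set y | Q y] y :> R.
Proof.
rewrite indicE; case: (boolP (Q y)) => H; first by rewrite mem_set.
by rewrite memNset //= (negbTE H).
Qed.

Lemma LsNorm_indic (R : realType) (n : nat) (s : \bar R) (c m : R)
    (Q : 'rV[R]_n -> bool) :
  measurable [set y : Rpow_t R n | Q (to_row y)] ->
  lebRn R n [set y : Rpow_t R n | Q (to_row y)] = m%:E -> 0 < m -> 0 <= c ->
  (0 < s)%E ->
  LsNorm s (fun x => c * (Q x)%:R) = (c * m `^ fine s^-1)%:E.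
Proof.
move=> mQ muQ m0 c0 s0; rewrite /LsNorm.
rewrite (eq_Lnorm _ _ (g := fun y => (c * \1_[set y | Q (to_row y)] y)%:E)).
  exact: Lnorm_indic.
by move=> y /=; rewrite indic_boolE.
Qed.

Lemma meas_Rn_indic (R : realType) (n : nat) (c : R) (Q : 'rV[R]_n -> bool) :
  measurable [set y : Rpow_t R n | Q (to_row y)] ->
  meas_Rn (fun x => c * (Q x)%:R).
Proof.
move=> mQ; rewrite /meas_Rn.
have -> : (fun y : Rpow_t R n => c * (Q (to_row y))%:R) =
    (fun y => c * \1_[set y | Q (to_row y)] y).
  by apply/funext => y; rewrite indic_boolE.
by apply: measurable_realfun.measurable_funM => //; exact: measurable_realfun.measurable_indic.
Qed.

Lemma l2fun_same (R : realType) (n N : nat) (c : R) (Q : 'rV[R]_n -> bool) :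
  0 <= c ->
  l2fun (fun (_ : 'I_N) x => c * (Q x)%:R) = fun x => c * Num.sqrt N%:R * (Q x)%:R.
Proof.
move=> c0; apply/funext => x; rewrite /l2fun sumr_const card_ord -[_ *+ N]mulr_natl.
rewrite sqrtrM ?ler0n // sqrtr_sqr.
by case: (Q x); rewrite ?mulr1 ?mulr0 ?normr0 ?mulr0 // ger0_norm // mulrC.
Qed.

Lemma l2fun_disjoint (R : realType) (n N : nat) (c : R)
    (P : 'I_N -> 'rV[R]_n -> bool) : 0 <= c ->
  (forall k l x, P k x -> P l x -> k = l) ->
  l2fun (fun k x => c * (P k x)%:R) = fun x => c * ([exists k, P k x])%:R.
Proof.
move=> c0 disj; apply/funext => x; rewrite /l2fun.
case: (boolP [exists k, P k x]) => [/existsP [j Pj]|/existsPn notP]; last first.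
  by rewrite big1 ?sqrtr0 ?mulr0 // => k _; rewrite (negbTE (notP k)) mulr0 expr0n.
rewrite (bigD1 j) //= big1 => [|k kj].
  by rewrite addr0 Pj mulr1 sqrtr_sqr ger0_norm.
case: (boolP (P k x)) => Pk; last by rewrite mulr0 expr0n.
by move: kj; rewrite (disj k j x Pk Pj) eqxx.
Qed.

Lemma LsL2Norm_disjoint_boxes (R : realType) (n N : nat) (a : 'I_N -> 'rV[R]_n)
    (e c : R) (s : \bar R) :
  (0 < N)%N -> 0 < e -> 0 <= c -> (0 < s)%E -> boxes_disjoint a e ->
  LsL2Norm s (fun k x => c * (inbox (a k) e x)%:R)
    = (c * (N%:R * e ^+ n) `^ fine s^-1)%:E.
Proof.
move=> N0 e0 c0 s0 disj; rewrite /LsL2Norm l2fun_disjoint //.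
have [mU muU] := disjoint_boxes_measure e0 disj.
by apply: LsNorm_indic => //; rewrite mulr_gt0 ?ltr0n ?exprn_gt0.
Qed.

Lemma LsL2Norm_same_box (R : realType) (n N : nat) (a : 'rV[R]_n) (e c : R)
    (s : \bar R) : 0 < e -> 0 <= c -> (0 < s)%E ->
  LsL2Norm s (fun (_ : 'I_N) x => c * (inbox a e x)%:R)
    = (c * Num.sqrt N%:R * (e ^+ n) `^ fine s^-1)%:E.
Proof.
move=> e0 c0 s0; rewrite /LsL2Norm l2fun_same //.
have [mB muB] := box_measure a e0.
by apply: LsNorm_indic; rewrite ?mulr_ge0 ?sqrtr_ge0 ?exprn_gt0.
Qed.

Lemma uniform_threshold (R : realType) (X : finType) (Q : X -> R -> Prop) :
  (forall x e e', 0 < e' <= e -> Q x e -> Q x e') ->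
  (forall x, exists2 e, 0 < e & Q x e) ->
  exists2 e, 0 < e & forall x, Q x e.
Proof.
move=> mono ex.
suff [e e0 He] : exists2 e, 0 < e & forall x, x \in enum X -> Q x e.
  by exists e => // x; apply: He; rewrite mem_enum.
elim: (enum X) => [|x s [e2 e20 IH]]; first by exists 1.
have [e1 e10 H1] := ex x.
have e12 : 0 < Num.min e1 e2 by rewrite lt_min e10 e20.
exists (Num.min e1 e2) => // y; rewrite in_cons => /orP [/eqP ->|ys].
  by apply: (mono _ e1) => //; rewrite e12 ge_min lexx.
by apply: (mono _ e2); [rewrite e12 ge_min lexx orbT | exact: IH].
Qed.

Lemma distinct_points_separated (R : realType) (n N : nat)
    (alpha : 'I_N -> 'rV[R]_n) : injective alpha ->
  exists2 e, 0 < e &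
    forall k l, k != l -> exists i, e <= `|alpha k 0 i - alpha l 0 i|.
Proof.
move=> inj.
pose Q (kl : 'I_N * 'I_N) e :=
  kl.1 != kl.2 -> exists i, e <= `|alpha kl.1 0 i - alpha kl.2 0 i|.
have [e e0 H] : exists2 e, 0 < e & forall kl, Q kl e.
  apply: uniform_threshold => [kl e e' /andP [_ ee] H /H [i Hi]|[k l]].
    by exists i; apply: le_trans Hi.
  have [->|kl] := eqVneq k l; first by exists 1 => //; rewrite /Q eqxx.
  have [i Hi] : exists i, alpha k 0 i != alpha l 0 i.
    apply/existsP; apply: contraNT kl => /existsPn H.
    by apply/eqP/inj/rowP => i; apply/eqP; move: (H i); rewrite negbK.
  by exists `|alpha k 0 i - alpha l 0 i|; rewrite ?normr_gt0 ?subr_eq0 // => _; exists i.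
by exists e => // k l kl; apply: (H (k, l)).
Qed.

Lemma scaled_boxes_disjoint (R : realType) (n N : nat) (alpha : 'I_N -> 'rV[R]_n)
    (delta : R) : injective alpha -> 0 < delta ->
  exists2 e, 0 < e &
    forall t, delta <= `|t| -> boxes_disjoint (fun k => t *: alpha k) e.
Proof.
move=> inj delta0; have [e0 e00 sep] := distinct_points_separated inj.
exists (delta * e0); first exact: mulr_gt0.
move=> t dt k l x /forallP Hk /forallP Hl; apply/eqP; apply/negP => /negP kl.
have [i Hi] := sep k l kl.
have := Hk i; have := Hl i; rewrite !mxE => /andP [h1 h2] /andP [h3 h4].
have : delta * e0 <= `|t * alpha k 0 i - t * alpha l 0 i|.
  by rewrite -mulrBr normrM ler_pM // ltW.
rewrite ler_normr => /orP [] H; lra.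
Qed.

Lemma inbox_shift (R : realType) (n : nat) (a v x : 'rV[R]_n) (e : R) :
  inbox a e (x + v) = inbox (a - v) e x.
Proof.
apply: eq_forallb => i; rewrite !mxE.
by apply/idP/idP => /andP [h1 h2]; apply/andP; split; lra.
Qed.

Lemma S_op_boxes (R : realType) (n N : nat) (alpha : 'I_N -> 'rV[R]_n)
    (rho e cf cg : R) :
  S_op alpha rho (fun k x => cf * (inbox ((1 + rho) *: alpha k) e x)%:R)
                 (fun _ x => cg * (inbox 0 e x)%:R)
  = fun k x => cf * cg * (inbox (alpha k) e x)%:R.
Proof.
apply/funext => k; apply/funext => x; rewrite /S_op !inbox_shift.
have -> : (1 + rho) *: alpha k - rho *: alpha k = alpha k.
  by rewrite scalerDl scale1r addrK.
rewrite opprK add0r.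
by case: (inbox _ _ _); rewrite ?mulr1 ?mulr0.
Qed.

Lemma normalized_ratio (R : realType) (N m a b : R) : 0 < N -> 0 < m ->
  ((N * m) `^ a)^-1 * (Num.sqrt N * m `^ b)^-1 * (N * m) `^ (a + b) =
  N `^ (b - 2^-1).
Proof.
move=> N0 m0.
have Nm0 : 0 < N * m by apply: mulr_gt0.
rewrite powRD ?(gt_eqF Nm0) ?implybT // (powRM b (ltW N0) (ltW m0)).
rewrite powRB ?(gt_eqF N0) ?implybT // powR12_sqrt ?(ltW N0) //.
have h1 : (N * m) `^ a != 0 by rewrite gt_eqF // powR_gt0.
have h2 : Num.sqrt N != 0 by rewrite gt_eqF // sqrtr_gt0.
have h3 : m `^ b != 0 by rewrite gt_eqF // powR_gt0.
by field; rewrite h1 h2 h3.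
Qed.

(* 1/s is finite for 0 < s <= +oo, so 1/p + 1/q = 1/r holds for the reals. *)
Lemma inv_fin_num (R : realType) (s : \bar R) : (0 < s)%E -> (s^-1 \is a fin_num)%E.
Proof. by case: s => [t||] //; rewrite lte_fin => t0; rewrite inver (gt_eqF t0). Qed.

Lemma S_opnorm_ge_q (R : realType) (n N : nat) (p q r : \bar R)
    (alpha : 'I_N -> 'rV[R]_n) (rho : R) :
  (0 < N)%N -> (0 < p)%E -> (0 < q)%E -> (0 < r)%E ->
  (p^-1 + q^-1 = r^-1)%E -> injective alpha -> 0 < rho ->
  ((N%:R `^ (fine q^-1 - 2^-1))%:E <= S_opnorm alpha rho p q r)%E.
Proof.
move=> N0 p0 q0 r0 hpqr inj rho0.
set a := fine p^-1%E; set b := fine q^-1%E.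
have hc : fine r^-1%E = a + b by rewrite -hpqr fineD ?inv_fin_num.
have delta0 : 0 < Num.min 1 rho by rewrite lt_min ltr01 rho0.
have [e e0 disj] := scaled_boxes_disjoint inj delta0.
have disj_f : boxes_disjoint (fun k => (1 + rho) *: alpha k) e.
  by apply: disj; rewrite ger0_norm ?ge_min ?lerDl ?(ltW rho0) // addr_ge0 // ltW.
have disj_S : boxes_disjoint alpha e.
  by move=> k l x; have := disj 1 _ k l x; rewrite normr1 ge_min lexx !scale1r; apply.
set m := e ^+ n.
have m0 : 0 < m by apply: exprn_gt0.
have Nm0 : 0 < N%:R * m by rewrite mulr_gt0 ?ltr0n.
set cf := ((N%:R * m) `^ a)^-1; set cg := (Num.sqrt N%:R * m `^ b)^-1.
have cf0 : 0 <= cf by rewrite invr_ge0 powR_ge0.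
have cg0 : 0 <= cg by rewrite invr_ge0 mulr_ge0 ?sqrtr_ge0 ?powR_ge0.
apply: ereal_sup_ubound => /=.
exists (fun k x => cf * (inbox ((1 + rho) *: alpha k) e x)%:R).
exists (fun _ x => cg * (inbox 0 e x)%:R).
split.
- by move=> k; apply: meas_Rn_indic; case: (box_measure ((1 + rho) *: alpha k) e0).
- by move=> k; apply: meas_Rn_indic; case: (box_measure (0 : 'rV[R]_n) e0).
- by rewrite LsL2Norm_disjoint_boxes // mulVf // gt_eqF // powR_gt0.
- rewrite LsL2Norm_same_box // -mulrA mulVf // gt_eqF //.
  by rewrite mulr_gt0 ?sqrtr_gt0 ?ltr0n ?powR_gt0.
- by rewrite S_op_boxes LsL2Norm_disjoint_boxes ?mulr_ge0 // hc normalized_ratio ?ltr0n.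
Qed.

Lemma S_op_swap (R : realType) (n N : nat) (alpha : 'I_N -> 'rV[R]_n) (rho : R)
    (f g : 'I_N -> 'rV[R]_n -> R) : rho != 0 ->
  S_op alpha rho f g = S_op (fun k => - rho *: alpha k) rho^-1 g f.
Proof.
move=> rho0; apply/funext => k; apply/funext => x; rewrite /S_op mulrC.
by rewrite scalerA mulrN mulVf // scaleN1r scaleNr opprK.
Qed.

Lemma S_opnorm_swap (R : realType) (n N : nat) (alpha : 'I_N -> 'rV[R]_n)
    (rho : R) (p q r : \bar R) : rho != 0 ->
  (S_opnorm (fun k => - rho *: alpha k) rho^-1 q p r <= S_opnorm alpha rho p q r)%E.
Proof.
move=> rho0; apply: le_ereal_sup => _ /= [f [g [mf mg nf ng ->]]].
by exists g, f; split => //; rewrite (S_op_swap alpha g f rho0).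
Qed.

Unset Implicit Arguments.

Theorem proposition2p3 (R : realType) (n N : nat) (p q r : \bar R)
  (alpha : 'I_N -> 'rV[R]_n) (rho : R) :
  (0 < N)%N ->
  (0 < p)%E -> (0 < q)%E -> (0 < r)%E ->
  (p^-1 + q^-1 = r^-1)%E ->
  injective alpha ->
  0 < rho ->
  ((Num.max (N%:R `^ (fine p^-1 - 2^-1)) (N%:R `^ (fine q^-1 - 2^-1)))%:E
     <= S_opnorm alpha rho p q r)%E.
Proof.
move=> N0 p0 q0 r0 hpqr inj rho0.
rewrite maxEle; case: ifP => _; first exact: S_opnorm_ge_q.
apply: (le_trans _ (S_opnorm_swap alpha p q r (lt0r_neq0 rho0))).
have nrho0 : - rho != 0 by rewrite oppr_eq0 lt0r_neq0.
apply: S_opnorm_ge_q => //.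
- by rewrite addeC.
- by move=> k l /(scalerI nrho0)/inj.
- by rewrite invr_gt0.
Qed.
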